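(* Let $D$ be a regular $(v,k,\lambda,\mu)$-PDS in a finite group $G$ with $0<\mu<k$ and $\sqrt\Delta\in\mathbb{Z}$. Let $H$ be a nontrivial subgroup of the group of linear characters of $G$ all of whose elements have order coprime to $\sqrt\Delta$, let $N=\bigcap_{\xi\in H}\ker\xi$, and let $\theta_\alpha$ denote the common value $\xi(D)$ of the nonprincipal $\xi\in H$. Then for every $a\in G\setminus N$, \[|Na\cap D|=\frac{k-\theta_\alpha}{|H|}.\]
   Context: A $(v,k,\lambda,\mu)$-PDS in a group $G$ of order $v$ is a $k$-subset $D$ such that every nonidentity element of $D$ is $xy^{-1}$ ($x,y\in D$) in exactly $\lambda$ ways and every nonidentity element of $G\setminus D$ in exactly $\mu$ ways; regular means $D=D^{(-1)}$ and $1\notin D$. $\Delta=(\lambda-\mu)^2+4(k-\mu)$. All nonprincipal characters in such an $H$ take the same value on $D$, where $\chi(D)=\sum_{d\in D}\chi(d)$. *)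

From mathcomp Require Import all_boot all_order all_algebra all_fingroup all_solvable all_field all_character.
Set Implicit Arguments. Unset Strict Implicit. Unset Printing Implicit Defensive.
Import GRing.Theory Num.Theory.

Local Open Scope group_scope.

Definition pds_count (gT : finGroupType) (D : {set gT}) (g : gT) : nat :=
  #|[set p : gT * gT | (p.1 \in D) && (p.2 \in D) && (p.1 * p.2^-1 == g)]|.

Definition is_PDS (gT : finGroupType) (G : {group gT}) (D : {set gT})
    (v k lam mu : nat) : Prop :=
  [/\ D \subset G, #|G| = v, #|D| = k &
      forall g, g \in G -> g != 1 ->
        pds_count D g = (if g \in D then lam else mu)].

Definition is_regular_PDS (gT : finGroupType) (G : {group gT}) (D : {set gT})
    (v k lam mu : nat) : Prop :=
  [/\ is_PDS G D v k lam mu, D^-1 = D & 1 \notin D].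

Definition pds_Delta (k lam mu : nat) : int :=
  ((lam%:Z - mu%:Z) ^+ 2 + 4 * (k%:Z - mu%:Z))%R.

Definition cf_on_set (gT : finGroupType) (G : {group gT}) (xi : 'CF(G))
    (D : {set gT}) : algC := (\sum_(d in D) xi d)%R.

From mathcomp Require Import all_boot all_order all_algebra all_fingroup all_solvable all_field all_character.
From mathcomp Require Import ring.
Set Implicit Arguments.
Unset Strict Implicit.
Unset Printing Implicit Defensive.
Import GRing.Theory Num.Theory.
Local Open Scope ring_scope.

(* For a nonprincipal linear character xi, counting the representations
   g = x y^-1 with x, y in D shows that xi(D) is a root of
   X^2 - (lam - mu) X - (k - mu), whose discriminant Delta = s^2 is a square.
   Hence xi(D) is a rational integer, and two such roots that are congruent
   modulo a prime q not dividing s coincide, as they would differ by +-s.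
   The Frobenius congruence and Fermat give xi(D) = xi^q(D) (mod q) for every
   prime q.  When q divides the order of xi, q does not divide s, so
   xi(D) = xi^q(D); this reduces the comparison to characters of prime order p,
   for which xi(D) = 1(D) = k (mod p), and two of these take the same value
   (directly when their orders agree, through their product otherwise).
   So all nonprincipal xi in H take a common value theta.  Finally,
   orthogonality in H gives sum_(xi in H) xi(a^-1) xi(D) = |H| |Na :&: D|,
   while the left-hand side is k + theta * sum_(xi <> 1) xi(a^-1) = k - theta. *)

Lemma eqAmodX (e x y : algC) n : x \in Aint -> y \in Aint ->
  (x == y %[mod e])%A -> (x ^+ n == y ^+ n %[mod e])%A.
Proof.
move=> Ax Ay exy; elim: n => [|n IHn]; first by rewrite !expr0.
by rewrite !exprS eqAmodM ?rpredX.
Qed.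

Lemma eqAmod_expD p (x y : algC) : prime p -> x \in Aint -> y \in Aint ->
  ((x + y) ^+ p == x ^+ p + y ^+ p %[mod p%:R])%A.
Proof.
case: p => [//|p] p_pr Ax Ay.
rewrite exprDn big_ord_recr big_ord_recl /= !subnn !subn0 !bin0 binn.
rewrite !expr0 !mulr1 mul1r !mulr1n -addrA eqAmodDl.
rewrite -[X in (_ == X %[mod _])%A]add0r eqAmodDr eqAmod0 rpred_sum // => i _.
have /dvdnP[m ->] : (p.+1 %| 'C(p.+1, bump 0 i))%N.
  by rewrite prime_dvd_bin //= /bump add1n ltnS ltn_ord.
rewrite mulrnA -[_ *+ p.+1]mulr_natr -eqAmod0 eqAmodMl0 //.
by rewrite rpredMn ?rpredM ?rpredX.
Qed.

Lemma eqAmod_exp_sum p (I : finType) (A : {pred I}) (F : I -> algC) :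
  prime p -> (forall i, F i \in Aint) ->
  ((\sum_(i in A) F i) ^+ p == \sum_(i in A) F i ^+ p %[mod p%:R])%A.
Proof.
move=> p_pr AF; suff [] : (\sum_(i in A) F i) \in Aint /\
    ((\sum_(i in A) F i) ^+ p == \sum_(i in A) F i ^+ p %[mod p%:R])%A by [].
apply: (big_ind2 (fun x y => x \in Aint /\ (x ^+ p == y %[mod p%:R])%A)).
- by rewrite rpred0 expr0n gtn_eqF ?prime_gt0.
- move=> x1 y1 x2 y2 [Ax1 e1] [Ax2 e2]; split; first exact: rpredD.
  exact: eqAmod_trans (eqAmod_expD p_pr Ax1 Ax2) (eqAmodD e1 e2).
- by move=> i _; split.
Qed.

Lemma eqAmod_int_exp p (z : algC) : prime p -> z \is a Num.int ->
  (z ^+ p == z %[mod p%:R])%A.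
Proof.
move=> p_pr /intrP[m ->]; set r := `|(m %% p)%Z|%N.
have mod_m : (m%:~R == r%:R %[mod p%:R])%A.
  have p_nz : p%:Z != 0 by rewrite eqz_nat -lt0n prime_gt0.
  rewrite {1}(divz_eq m p) rmorphD rmorphM /= /r.
  rewrite natr_absz ger0_norm ?modz_ge0 //.
  by rewrite eqAmod_addl_mul ?Aint_int.
apply: eqAmod_trans (eqAmodX p (Aint_int _) (rpred_nat _ _) mod_m) _.
rewrite eqAmod_sym in mod_m; apply: eqAmod_trans mod_m.
by rewrite -natrX eqAmod_nat fermat_little.
Qed.

Lemma quad_root_int (x b c s : algC) :
  x ^+ 2 = c + b * x -> s ^+ 2 = b ^+ 2 + 4 * c ->
  b \in Crat -> s \in Crat -> x \in Aint -> x \is a Num.int.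
Proof.
move=> x_root s_sqr Qb Qs Ax; apply: Cint_rat_Aint => //.
have x_eq : x = (b + (2 * x - b)) / 2 by field.
have /eqP : (2 * x - b) ^+ 2 = s ^+ 2 by rewrite s_sqr; ring: x_root.
rewrite eqf_sqr => /orP[] /eqP d_eq; rewrite x_eq d_eq.
  by rewrite rpred_div ?rpredD ?rpred_nat.
by rewrite rpred_div ?rpredD ?rpredN ?rpred_nat.
Qed.

Lemma quad_roots_eqAmod (x y b c : algC) (s q : nat) :
  x ^+ 2 = c + b * x -> y ^+ 2 = c + b * y -> s%:R ^+ 2 = b ^+ 2 + 4 * c ->
  x \in Aint -> y \in Aint -> prime q -> ~~ (q %| s)%N ->
  (x == y %[mod q%:R])%A -> x = y.
Proof.
move=> x_root y_root s_sqr Ax Ay q_pr q'_s exy; apply: contraNeq q'_s => x'y.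
have sum_xy : x + y = b.
  have /eqP : (x - y) * (x + y - b) = 0 by ring: x_root y_root.
  by rewrite mulf_eq0 !subr_eq0 (negbTE x'y) => /eqP.
have c_eq : c = x ^+ 2 - b * x by rewrite x_root addrK.
have sqr_xy : (x - y) ^+ 2 = s%:R ^+ 2 by rewrite s_sqr c_eq -sum_xy; ring.
have xy0 : (x - y == 0 %[mod q%:R])%A by rewrite eqAmod0.
have := eqAmodMr (rpredB Ax Ay) xy0.
by rewrite mul0r -expr2 sqr_xy -natrX eqAmod0_nat Euclid_dvdX // andbT.
Qed.

Lemma mul_fixed_eq0 (R : idomainType) (u x : R) :
  u != 1 -> u * x = x -> x = 0.
Proof.
move=> u_nt ux_x; apply/eqP; apply: contraNT u_nt => x_nz.
by apply/eqP/(mulIf x_nz); rewrite mul1r.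
Qed.

Lemma sum_mem_mulr (T : finType) (R : pzSemiRingType) (A B : {set T})
    (F : T -> R) :
  \sum_(x in B) (x \in A)%:R * F x = \sum_(x in A :&: B) F x.
Proof.
rewrite big_mkcond [RHS]big_mkcond; apply: eq_bigr => x _.
by rewrite inE; case: (x \in A); case: (x \in B); rewrite ?mul1r ?mul0r.
Qed.

Lemma lin_char_sum_eq0 (gT : finGroupType) (G : {group gT}) (xi : 'CF(G)) :
  xi \is a linear_char -> xi != 1 -> \sum_(g in G) xi g = 0.
Proof.
move=> lin_xi xi_nt; have [h Gh xi_h] : exists2 h, h \in G & xi h != 1.
  apply/exists_inP; apply: contraNT xi_nt => /exists_inPn xi1.
  by apply/eqP/cfun_inP => g Gg; rewrite cfun1E Gg; apply/eqP/negbNE/xi1.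
apply: (mul_fixed_eq0 xi_h); rewrite mulr_sumr [RHS](reindex_inj (mulgI h)) /=.
by apply: eq_big => [g | g Gg]; rewrite ?groupMl ?lin_charM.
Qed.

Lemma prime_cforder_neq1 (gT : finGroupType) (G : {group gT}) (phi : 'CF(G)) :
  prime #[phi]%CF -> phi != 1.
Proof.
apply: contraTneq => ->; suff /eqP -> : #[1 : 'CF(G)]%CF == 1%N by [].
by rewrite -dvdn1 dvdn_cforder expr1.
Qed.

Section CfOnSet.

Variables (gT : finGroupType) (G : {group gT}) (D : {set gT}).
Hypothesis sDG : D \subset G.

Lemma cf_on_set_cfun1 : cf_on_set (1 : 'CF(G)) D = #|D|%:R.
Proof.
rewrite /cf_on_set -sumr_const; apply: eq_bigr => d Dd.
by rewrite cfun1E (subsetP sDG).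
Qed.

Lemma cf_on_set_exp (xi : 'CF(G)) n :
  cf_on_set (xi ^+ n) D = \sum_(d in D) xi d ^+ n.
Proof. by apply: eq_bigr => d Dd; rewrite exp_cfunE ?(subsetP sDG). Qed.

Lemma char_cf_on_set_Aint (xi : 'CF(G)) :
  xi \is a character -> cf_on_set xi D \in Aint.
Proof. by move=> Nxi; apply: rpred_sum => d _; apply: Aint_char. Qed.

Lemma lin_cf_on_set_sqr (xi : 'CF(G)) : xi \is a linear_char -> D^-1%g = D ->
  cf_on_set xi D ^+ 2 = \sum_(g in G) xi g *+ pds_count D g.
Proof.
move=> lin_xi DV; have DG := subsetP sDG.
pose f (p : gT * gT) := (p.1 * p.2^-1)%g.
transitivity (\sum_(x in D) \sum_(y in D) xi (f (x, y))).
  rewrite expr2 mulr_suml; apply: eq_bigr => x Dx; rewrite mulr_sumr.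
  rewrite [RHS](reindex_inj invg_inj) /=; apply: eq_big => [y | y Dy].
    by rewrite -memV_invg DV.
  by rewrite /f /= invgK lin_charM ?DG.
rewrite pair_big /= (partition_big f (fun g => g \in G)).
- apply: eq_bigr => g _; rewrite /pds_count -sumr_const.
  by apply: eq_big => [p | p /andP[_ /eqP <-]]; rewrite ?inE.
- by move=> p /andP[/DG Gx /DG Gy]; rewrite /f groupM ?groupV.
Qed.

End CfOnSet.

Lemma pds_count1 (gT : finGroupType) (D : {set gT}) : pds_count D 1 = #|D|.
Proof.
have diag_inj : injective (fun x : gT => (x, x)) by move=> x y [].
rewrite /pds_count -[RHS](card_imset _ diag_inj).
apply: eq_card => -[x y]; rewrite inE /= -eq_mulgV1.
apply/andP/imsetP => [[/andP[Dx _] /eqP <-] | [z Dz [-> ->]]].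
  by exists x.
by rewrite Dz eqxx.
Qed.

Lemma pds_lin_cf_on_set_quad (gT : finGroupType) (G : {group gT}) (D : {set gT})
    v k lam mu (xi : 'CF(G)) :
  is_regular_PDS G D v k lam mu -> xi \is a linear_char -> xi != 1 ->
  cf_on_set xi D ^+ 2 = (k%:R - mu%:R) + (lam%:R - mu%:R) * cf_on_set xi D.
Proof.
case=> [[sDG _ card_D count_D] DV D'1] lin_xi xi_nt.
have count_G g : g \in G -> (pds_count D g)%:R = mu%:R
    + (lam%:R - mu%:R) * (g \in D)%:R
    + (k%:R - mu%:R) * (g \in [set 1%g])%:R :> algC.
  move=> Gg; rewrite inE; have [-> | g_nt] := eqVneq g 1%g.
    by rewrite pds_count1 card_D (negbTE D'1) mulr0 mulr1 addr0 subrKC.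
  by rewrite count_D //; case: (g \in D); rewrite ?mulr1 ?mulr0 ?addr0 ?subrKC.
rewrite lin_cf_on_set_sqr // (eq_bigr (fun g => mu%:R * xi g +
    (lam%:R - mu%:R) * ((g \in D)%:R * xi g) +
    (k%:R - mu%:R) * ((g \in [set 1%g])%:R * xi g))) => [|g Gg]; last first.
  by rewrite -[xi g *+ _]mulr_natr count_G //; ring.
rewrite !big_split -!mulr_sumr !sum_mem_mulr /= lin_char_sum_eq0 // mulr0 add0r.
rewrite (setIidPl sDG) (setIidPl _) ?sub1set ?group1 // big_set1 lin_char1 //.
by rewrite mulr1 addrC.
Qed.

Section UniformValue.

Variables (gT : finGroupType) (G : {group gT}) (D : {set gT}).
Variables (v k lam mu s : nat).
Hypothesis regD : is_regular_PDS G D v k lam mu.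
Hypothesis Delta_sqr : s%:Z ^+ 2 = pds_Delta k lam mu.

Let sDG : D \subset G. Proof. by case: regD => [[]]. Qed.

Let Delta_sqrC :
  s%:R ^+ 2 = (lam%:R - mu%:R) ^+ 2 + 4 * (k%:R - mu%:R) :> algC.
Proof.
have -> : s%:R ^+ 2 = (s%:Z ^+ 2)%:~R :> algC by ring.
by rewrite Delta_sqr /pds_Delta; ring.
Qed.

Lemma lin_cf_on_set_int (xi : 'CF(G)) :
  xi \is a linear_char -> cf_on_set xi D \is a Num.int.
Proof.
move=> lin_xi; have [-> | xi_nt] := eqVneq xi 1.
  by rewrite cf_on_set_cfun1 ?rpred_nat.
apply: quad_root_int (pds_lin_cf_on_set_quad regD lin_xi xi_nt) Delta_sqrC
  _ _ _.
- by rewrite rpredB ?rpred_nat.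
- exact: rpred_nat.
- exact/char_cf_on_set_Aint/lin_charW.
Qed.

Lemma lin_cf_on_set_eqAmod_exp (xi : 'CF(G)) q :
  xi \is a linear_char -> prime q ->
  (cf_on_set xi D == cf_on_set (xi ^+ q) D %[mod q%:R])%A.
Proof.
move=> lin_xi q_pr; rewrite cf_on_set_exp //.
have Aint_xi d : xi d \in Aint by apply/Aint_char/lin_charW.
have := eqAmod_exp_sum (mem D) q_pr Aint_xi.
apply: eqAmod_trans; rewrite eqAmod_sym.
exact: eqAmod_int_exp (lin_cf_on_set_int lin_xi).
Qed.

Lemma lin_cf_on_set_eq_mod (xi psi : 'CF(G)) q :
  xi \is a linear_char -> psi \is a linear_char -> xi != 1 -> psi != 1 ->
  prime q -> ~~ (q %| s)%N ->
  (cf_on_set xi D == cf_on_set psi D %[mod q%:R])%A ->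
  cf_on_set xi D = cf_on_set psi D.
Proof.
move=> lin_xi lin_psi xi_nt psi_nt.
apply: quad_roots_eqAmod (pds_lin_cf_on_set_quad regD lin_xi xi_nt)
  (pds_lin_cf_on_set_quad regD lin_psi psi_nt) Delta_sqrC _ _;
  exact/char_cf_on_set_Aint/lin_charW.
Qed.

Variable H : seq 'CF(G).
Hypothesis linH : {in H, forall xi, xi \is a linear_char}.
Hypothesis H1 : 1 \in H.
Hypothesis mulH : {in H &, forall xi psi, xi * psi \in H}.
Hypothesis coprimeH : {in H, forall xi, coprime #[xi]%CF s}.

Let exprH (xi : 'CF(G)) n : xi \in H -> xi ^+ n \in H.
Proof. by move=> Hxi; elim: n => [|n IHn]; rewrite ?expr0 ?exprS ?mulH. Qed.

Let prime_dvd_cforderH (xi : 'CF(G)) q :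
  xi \in H -> prime q -> (q %| #[xi]%CF)%N -> ~~ (q %| s)%N.
Proof.
move=> Hxi q_pr q_xi.
by rewrite -prime_coprime // (coprime_dvdl q_xi) ?coprimeH.
Qed.

Lemma cf_on_set_exp_prime (xi : 'CF(G)) q : xi \in H -> prime q ->
  (q %| #[xi]%CF)%N -> xi ^+ q != 1 -> cf_on_set (xi ^+ q) D = cf_on_set xi D.
Proof.
move=> Hxi q_pr q_xi xiq_nt; symmetry.
apply: lin_cf_on_set_eq_mod (prime_dvd_cforderH Hxi q_pr q_xi) _;
  rewrite ?linH ?exprH //.
- by apply: contraNneq xiq_nt => ->; rewrite expr1n.
- exact: lin_cf_on_set_eqAmod_exp (linH Hxi) q_pr.
Qed.

Lemma cf_on_set_prime_cforder (xi : 'CF(G)) : xi \in H -> xi != 1 ->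
  exists2 chi, chi \in H & prime #[chi]%CF /\ cf_on_set chi D = cf_on_set xi D.
Proof.
have [n] := ubnP #[xi]%CF; elim: n xi => // n IHn xi lt_xi_n Hxi xi_nt.
have [xi_pr | xi_npr] := boolP (prime #[xi]%CF); first by exists xi.
have xi_neq1 : #[xi]%CF != 1%N.
  by apply: contraNneq xi_nt => xi1; rewrite -[xi]expr1 -xi1 exp_cforder.
have xi_gt1 : (1 < #[xi]%CF)%N.
  by rewrite ltn_neqAle eq_sym xi_neq1 cforder_lin_char_gt0 ?linH.
have q_pr := pdiv_prime xi_gt1; have q_xi := pdiv_dvd #[xi]%CF.
set q := pdiv _ in q_pr q_xi.
have xiq_nt : xi ^+ q != 1.
  apply: contra xi_npr; rewrite -dvdn_cforder.
  by move/(prime_nt_dvdP q_pr xi_neq1) ->.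
have lt_xiq : (#[xi ^+ q]%CF < #[xi]%CF)%N.
  have : (#[xi ^+ q]%CF %| #[xi]%CF %/ q)%N.
    by rewrite dvdn_cforder -exprM mulnC divnK // exp_cforder.
  have xi_gt0 := ltnW xi_gt1.
  have q_le : (0 < #[xi]%CF %/ q)%N.
    by rewrite divn_gt0 ?prime_gt0 // dvdn_leq.
  move/(dvdn_leq q_le)/leq_ltn_trans; apply.
  by rewrite ltn_Pdiv ?prime_gt1.
have [|chi Hchi [chi_pr chi_xiq]] := IHn (xi ^+ q) _ (exprH q Hxi) xiq_nt.
  exact: leq_trans lt_xiq (ltnSE lt_xi_n).
by exists chi; rewrite // chi_xiq cf_on_set_exp_prime.
Qed.

Let cf_on_set_mul_prime_cforder (chi1 chi2 : 'CF(G)) :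
    chi1 \in H -> chi2 \in H -> prime #[chi1]%CF -> prime #[chi2]%CF ->
    #[chi1]%CF != #[chi2]%CF ->
  cf_on_set (chi1 * chi2) D = cf_on_set chi2 D.
Proof.
move=> H1c H2c p1 p2 p1'p2; set q := #[chi1]%CF in p1 p1'p2.
have chi2q_nt : chi2 ^+ q != 1.
  by apply: contra p1'p2; rewrite -dvdn_cforder dvdn_prime2 // eq_sym.
have mulq : (chi1 * chi2) ^+ q = chi2 ^+ q by rewrite exprMn exp_cforder mul1r.
have chi12_nt : chi1 * chi2 != 1.
  by apply: contraNneq chi2q_nt => chi12_1; rewrite -mulq chi12_1 expr1n.
apply: (lin_cf_on_set_eq_mod (linH (mulH H1c H2c)) (linH H2c) chi12_nt
  (prime_cforder_neq1 p2) p1 (prime_dvd_cforderH H1c p1 (dvdnn _))).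
have := lin_cf_on_set_eqAmod_exp (linH (mulH H1c H2c)) p1.
rewrite mulq => /eqAmod_trans; apply; rewrite eqAmod_sym.
exact: lin_cf_on_set_eqAmod_exp (linH H2c) p1.
Qed.

Lemma cf_on_set_prime_cforder_eq (chi1 chi2 : 'CF(G)) :
  chi1 \in H -> chi2 \in H -> prime #[chi1]%CF -> prime #[chi2]%CF ->
  cf_on_set chi1 D = cf_on_set chi2 D.
Proof.
move=> H1c H2c p1 p2.
have [eq_p | neq_p] := eqVneq #[chi1]%CF #[chi2]%CF; last first.
  rewrite -(cf_on_set_mul_prime_cforder H1c H2c) // mulrC.
  by rewrite cf_on_set_mul_prime_cforder // eq_sym.
have cong1 (chi : 'CF(G)) : chi \in H -> prime #[chi]%CF ->
    (cf_on_set chi D == cf_on_set (1 : 'CF(G)) D %[mod #[chi]%CF%:R])%A.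
  by move=> Hc /(lin_cf_on_set_eqAmod_exp (linH Hc)); rewrite exp_cforder.
apply: (lin_cf_on_set_eq_mod (linH H1c) (linH H2c) (prime_cforder_neq1 p1)
  (prime_cforder_neq1 p2) p1 (prime_dvd_cforderH H1c p1 (dvdnn _))).
apply: eqAmod_trans (cong1 _ H1c p1) _.
by rewrite eqAmod_sym eq_p cong1.
Qed.

Lemma cf_on_set_uniform (xi psi : 'CF(G)) :
  xi \in H -> psi \in H -> xi != 1 -> psi != 1 ->
  cf_on_set xi D = cf_on_set psi D.
Proof.
move=> Hxi Hpsi xi_nt psi_nt.
have [chi1 H1c [p1 <-]] := cf_on_set_prime_cforder Hxi xi_nt.
have [chi2 H2c [p2 <-]] := cf_on_set_prime_cforder Hpsi psi_nt.
exact: cf_on_set_prime_cforder_eq.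
Qed.

End UniformValue.

Lemma mem_bigcap_seq (gT : finGroupType) (I : Type) (r : seq I)
    (F : I -> {set gT}) g :
  (g \in \bigcap_(i <- r) F i) = all (fun i => g \in F i) r.
Proof. by elim: r => [|i r IHr]; rewrite ?big_nil ?big_cons inE ?IHr. Qed.

Lemma lin_char_cfkerE (gT : finGroupType) (G : {group gT}) (xi : 'CF(G)) g :
  xi \is a linear_char -> g \in G -> (g \in cfker xi) = (xi g == 1).
Proof.
by move=> lin_xi Gg; rewrite cfkerEchar ?lin_charW // inE Gg lin_char1.
Qed.

Section CharacterSeq.

Variables (gT : finGroupType) (G : {group gT}) (H : seq 'CF(G)).
Hypothesis uniqH : uniq H.
Hypothesis linH : {in H, forall xi, xi \is a linear_char}.
Hypothesis H1 : 1 \in H.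
Hypothesis mulH : {in H &, forall xi psi, xi * psi \in H}.

Let N := \bigcap_(xi <- H) cfker xi.

Lemma sum_cfun_seq_ker g : g \in N -> \sum_(xi <- H) xi g = (size H)%:R.
Proof.
rewrite mem_bigcap_seq => /allP kerH.
have Gg := subsetP (cfker_sub 1) g (kerH 1 H1).
rewrite -sum1_size natr_sum big_seq [RHS]big_seq; apply: eq_bigr => xi Hxi.
by apply/eqP; rewrite -lin_char_cfkerE ?linH ?kerH.
Qed.

Lemma sum_cfun_seq_eq0 g : g \in G -> g \notin N -> \sum_(xi <- H) xi g = 0.
Proof.
move=> Gg; rewrite mem_bigcap_seq => /allPn[psi Hpsi psi'g].
have psi_g : psi g != 1 by rewrite -lin_char_cfkerE ?linH.
have uniq_psiH : uniq [seq psi * xi | xi <- H].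
  by rewrite map_inj_uniq // => xi1 xi2; apply/mulrI/lin_char_unitr/linH.
have psiH_H : perm_eq [seq psi * xi | xi <- H] H.
  have psiH_sub : {subset [seq psi * xi | xi <- H] <= H}.
    by move=> _ /mapP[xi Hxi ->]; apply: mulH.
  apply: uniq_perm => //; apply: (uniq_min_size uniq_psiH psiH_sub _).2.
  by rewrite size_map.
apply: (mul_fixed_eq0 psi_g).
rewrite -[in RHS](perm_big _ psiH_H) big_map mulr_sumr.
by apply: eq_bigr => xi _; rewrite cfunE.
Qed.

Lemma sum_cfun_seq_cf_on_set (D : {set gT}) a : D \subset G -> a \in G ->
  \sum_(xi <- H) xi a^-1%g * cf_on_set xi D
    = (size H)%:R * #|(N :* a :&: D)%g|%:R.
Proof.
move=> sDG Ga; have DG := subsetP sDG.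
transitivity (\sum_(d in D) \sum_(xi <- H) xi (d * a^-1)%g).
  rewrite exchange_big big_seq [RHS]big_seq /=; apply: eq_bigr => xi Hxi.
  rewrite mulr_sumr; apply: eq_bigr => d Dd.
  by rewrite mulrC (lin_charM (linH Hxi) (DG d Dd) (groupVr Ga)).
rewrite -sum1_card natr_sum mulr_sumr big_mkcond [RHS]big_mkcond /=.
apply: eq_bigr => d _; rewrite inE mem_rcoset andbC.
have [Dd | //] := boolP (d \in D).
have [ker_d | ker'd] := boolP (d * a^-1 \in N)%g.
  by rewrite sum_cfun_seq_ker // mulr1.
by rewrite sum_cfun_seq_eq0 // groupM ?groupVr // DG.
Qed.

End CharacterSeq.

Theorem mainTheorem13 (gT : finGroupType) (G : {group gT}) (D : {set gT})
    (v k lam mu : nat) (s : nat) (H : seq 'CF(G)) :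
  is_regular_PDS G D v k lam mu ->
  (0 < mu < k)%N ->
  (s%:Z ^+ 2)%R = pds_Delta k lam mu ->
  (* H is a nontrivial subgroup of the group of linear characters of G *)
  uniq H ->
  {in H, forall xi, xi \is a linear_char} ->
  (1%R : 'CF(G)) \in H ->
  {in H &, forall xi1 xi2, (xi1 * xi2)%R \in H} ->
  (exists2 xi, xi \in H & xi != 1%R) ->
  {in H, forall xi, coprime #[xi]%CF s} ->
  let N := \bigcap_(xi <- H) cfker xi in
  forall xi, xi \in H -> xi != 1%R ->
  forall a, a \in G :\: N ->
    ((#|((N :* a) :&: D)%g|)%:R : algC)%R = ((k%:R - cf_on_set xi D) / (size H)%:R)%R.
Proof.
move=> regD _ Delta_sqr uniqH linH H1 mulH _ coprimeH N xi Hxi xi_nt a.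
case/setDP=> Ga a'N; have [[sDG _ card_D _] _ _] := regD.
have a'N' : a^-1%g \notin N.
  apply: contra a'N; rewrite !mem_bigcap_seq => /allP kerV.
  by apply/allP => chi /kerV; rewrite groupV.
have uniform (chi : 'CF(G)) :
    chi \in H -> chi != 1 -> cf_on_set chi D = cf_on_set xi D.
  move=> Hchi chi_nt.
  exact (cf_on_set_uniform regD Delta_sqr linH H1 mulH coprimeH Hchi Hxi chi_nt xi_nt).
have sum_nt : \sum_(chi <- H | chi != 1) chi a^-1%g = -1.
  have := sum_cfun_seq_eq0 uniqH linH mulH (groupVr Ga) a'N'.
  rewrite (bigD1_seq 1) //= cfun1E groupV Ga /= mulr1n addrC.
  by move/eqP; rewrite addr_eq0 => /eqP.
have := sum_cfun_seq_cf_on_set uniqH linH H1 mulH sDG Ga.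
rewrite (bigD1_seq 1) //= cfun1E groupV Ga mul1r cf_on_set_cfun1 // card_D.
rewrite big_seq_cond
  (eq_bigr (fun chi : 'CF(G) => chi a^-1%g * cf_on_set xi D)); last first.
  by move=> chi /andP[Hchi chi_nt]; rewrite uniform.
rewrite -big_seq_cond -mulr_suml sum_nt mulN1r => ->.
by rewrite mulrC mulKf // pnatr_eq0; apply: contraTneq H1 => /size0nil ->.
Qed.
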